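(* Let $\epsilon>0$, $T\in\mathbb{N}$, and $B\ge T$, and define $k=5\lfloor B/T\rfloor+5$. Then there exists an instance of the UVP problem (with total budget $B$, maximum per-configuration budget $T$, smoothness parameter $\epsilon$) satisfying the concavity assumption, with $k$ clusters each of radius $r_k>0$, such that no algorithm can achieve an approximation factor exceeding $(1-\epsilon r_k)$, where $r_k$ is the optimal clustering radius for $k$ clusters.
   Context: UVP problem: $A:\mathbb{R}^d\times[T]\to[0,1]$ is unknown ($[T]=\{1,\dots,T\}$); a finite $\mathcal{X}\subset\mathbb{R}^d$ is known; goal $\max_{b_1,\dots,b_n}\max_iA(\mathbf{x}_i,b_i)$ subject to $\sum_ib_i\le B$; obtaining $A(\mathbf{x},b)$ requires evaluating $A(\mathbf{x},1),\dots,A(\mathbf{x},b)$ in sequence, costing $b$ units. Instances satisfy Assumption 1 (monotonicity): $b_1\le b_2\Rightarrow A(\mathbf{x},b_1)\le A(\mathbf{x},b_2)$, and Assumption 2 (smoothness): for all $\mathbf{x}_i,\mathbf{x}_j\in\mathcal{X}$, $\min_{b\in[T]}A(\mathbf{x}_i,b)/A(\mathbf{x}_j,b)\ge1-\epsilon\|\mathbf{x}_i-\mathbf{x}_j\|_2$ (ratio $=1$ if both are $0$, $+\infty$ if only the denominator is $0$). Concavity assumption: for all $\mathbf{x}\in\mathcal{X}$ and $b\in\{2,\dots,T-1\}$, $A(\mathbf{x},b+1)-A(\mathbf{x},b)\le A(\mathbf{x},b)-A(\mathbf{x},b-1)$. The optimal clustering radius for $m$ clusters is $\min_{\mathcal{C}\subseteq\mathcal{X},|\mathcal{C}|=m}\max_{\mathbf{x}\in\mathcal{X}}\min_{\mathbf{c}\in\mathcal{C}}\|\mathbf{x}-\mathbf{c}\|_2$.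 An algorithm (possibly randomized) adaptively evaluates values within budget $B$ and outputs $\mathbf{x}^{Alg}$; it achieves approximation factor $\alpha$ on an instance if $\mathbb{E}[A(\mathbf{x}^{Alg},T)]\ge\alpha\max_{\mathbf{x}\in\mathcal{X}}A(\mathbf{x},T)$. *)

From HB Require Import structures.
From mathcomp Require Import all_boot all_order all_algebra.
From mathcomp Require Import all_classical all_reals all_analysis.
Set Implicit Arguments. Unset Strict Implicit. Unset Printing Implicit Defensive.
Import Order.TTheory GRing.Theory Num.Theory.
Local Open Scope ring_scope.
Local Open Scope classical_set_scope.

Section UVP.
Variable R : realType.

Definition l2norm (d : nat) (v : 'rV[R]_d) : R :=
  Num.sqrt (\sum_(i < d) (v ord0 i) ^+ 2).

Definition dist2 (d : nat) (u v : 'rV[R]_d) : R := l2norm (u - v).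

(* The ratio of Assumption 2: a / c, with 0/0 = 1 and a/0 = +oo for a <> 0. *)
Definition uvp_ratio (a c : R) : \bar R :=
  if c == 0 then (if a == 0 then 1%E else +oo%E) else (a / c)%:E.

(* The known finite set X = { x i | i < n } (x injective), A : R^d x [T] -> [0,1]
   given as a function on R^d x nat whose values on b in [T] = {1..T} matter. *)

Definition range01 (d T : nat) (A : 'rV[R]_d -> nat -> R) : Prop :=
  forall v b, (1 <= b <= T)%N -> 0 <= A v b <= 1.

Definition monotone_assump (d n T : nat) (x : 'I_n -> 'rV[R]_d)
    (A : 'rV[R]_d -> nat -> R) : Prop :=
  forall i b1 b2, (1 <= b1)%N -> (b1 <= b2)%N -> (b2 <= T)%N ->
    A (x i) b1 <= A (x i) b2.

Definition smooth_assump (d n T : nat) (eps : R) (x : 'I_n -> 'rV[R]_d)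
    (A : 'rV[R]_d -> nat -> R) : Prop :=
  forall i j b, (1 <= b <= T)%N ->
    ((1 - eps * dist2 (x i) (x j))%:E <= uvp_ratio (A (x i) b) (A (x j) b))%E.

Definition concave_assump (d n T : nat) (x : 'I_n -> 'rV[R]_d)
    (A : 'rV[R]_d -> nat -> R) : Prop :=
  forall i b, (2 <= b)%N -> (b <= T.-1)%N ->
    A (x i) b.+1 - A (x i) b <= A (x i) b - A (x i) b.-1.

Definition uvp_instance (d n T : nat) (eps : R) (x : 'I_n -> 'rV[R]_d)
    (A : 'rV[R]_d -> nat -> R) : Prop :=
  range01 T A /\ monotone_assump T x A /\ smooth_assump T eps x A.

(* rho = max_{i} min_{c in C} ||x_i - x_c||_2  (C nonempty). *)
Definition cover_radius (d n : nat) (x : 'I_n -> 'rV[R]_d) (C : {set 'I_n})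
    (rho : R) : Prop :=
  (forall i, exists2 c, c \in C & dist2 (x i) (x c) <= rho) /\
  (exists i, forall c, c \in C -> rho <= dist2 (x i) (x c)).

(* r = min_{C subset X, |C| = m} max_{x in X} min_{c in C} ||x - c||_2. *)
Definition opt_cluster_radius (d n : nat) (x : 'I_n -> 'rV[R]_d) (m : nat)
    (r : R) : Prop :=
  (exists C : {set 'I_n}, #|C| = m /\ cover_radius x C r) /\
  (forall (C : {set 'I_n}) rho, #|C| = m -> cover_radius x C rho -> r <= rho).

(* Deterministic adaptive algorithm: given the history of observations
   (configuration index, observed value), either advance a configuration by
   one level (Some i) or stop (None); when finished, output a configuration. *)
Record strategy (n : nat) := Strategy {
  st_query : seq ('I_n * R) -> option 'I_n;
  st_output : seq ('I_n * R) -> 'I_n }.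

Definition level (n : nat) (h : seq ('I_n * R)) (i : 'I_n) : nat :=
  count (fun p => p.1 == i) h.

(* Execution: each step advances one configuration from level b to b+1,
   observing A(x_i, b+1) at unit cost; total cost sum_i b_i <= B, b_i <= T. *)
Fixpoint run (d n T : nat) (x : 'I_n -> 'rV[R]_d) (A : 'rV[R]_d -> nat -> R)
    (s : strategy n) (fuel : nat) (h : seq ('I_n * R)) : seq ('I_n * R) :=
  match fuel with
  | 0 => h
  | f.+1 =>
    match st_query s h with
    | None => h
    | Some i =>
      let b := level h i in
      if (b < T)%N then run T x A s f (rcons h (i, A (x i) b.+1)) else h
    end
  end.

Definition alg_output (d n T B : nat) (x : 'I_n -> 'rV[R]_d)
    (A : 'rV[R]_d -> nat -> R) (s : strategy n) : 'I_n :=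
  st_output s (run T x A s B [::]).

(* Expected value E[A(x^Alg, T)] of a randomized algorithm, i.e. a random
   choice (seed omega ~ P) of a deterministic adaptive strategy. *)
Definition expected_value (dd : measure_display) (Omega : measurableType dd)
    (P : probability Omega R) (d n T B : nat) (x : 'I_n -> 'rV[R]_d)
    (A : 'rV[R]_d -> nat -> R) (alg : Omega -> strategy n) : R :=
  \sum_(j < n) fine (P [set w | alg_output T B x A (alg w) = j]) * A (x j) T.

Definition opt_value (d n T : nat) (x : 'I_n -> 'rV[R]_d)
    (A : 'rV[R]_d -> nat -> R) : R :=
  \big[Num.max/0]_(j < n) A (x j) T.

End UVP.

From mathcomp Require Import all_boot all_order all_algebra.
From mathcomp Require Import all_classical all_reals all_analysis.
From mathcomp Require Import measurable_realfun.
From mathcomp Require Import zify lra.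
Set Implicit Arguments. Unset Strict Implicit. Unset Printing Implicit Defensive.
Import Order.TTheory GRing.Theory Num.Theory.
Local Open Scope ring_scope.
Local Open Scope classical_set_scope.

(* Two of the k + 1 points are r apart, so k clusters have radius r, while each
   of the other k - 1 points lies at distance at least 1/eps from all the rest.
   For such a far point j, the instance "spike j" follows min(b, T - 1)/T at
   every configuration except x_j, which reaches 1 at level T; smoothness holds
   because configurations with different curves are 1/eps apart.  Until an
   algorithm spends T units on x_j it cannot tell spike j from the flat instance,
   and with budget B it does so for at most B/T configurations.  Hence, for each
   random seed, it outputs the spike on at most B/T + 1 of the k - 1 spike
   instances, so some spike is output with probability below 1/2, and on that
   instance the expected value is below 1 - 1/(2T) = 1 - eps r while the
   optimum is 1. *)

Lemma card_ord_geq (n m : nat) : #|[pred i : 'I_n | (m <= i)%N]| = (n - m)%N.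
Proof.
rewrite -sum1_card (eq_bigl (fun i : 'I_n => xpredT i && (m <= i)%N)) //.
by rewrite -(big_geq_mkord m n xpredT (fun=> 1%N)) sum_nat_const_nat muln1.
Qed.

Section Run.
Variables (R : realType) (d n T : nat) (x : 'I_n -> 'rV[R]_d).
Implicit Types (A : 'rV[R]_d -> nat -> R) (s : strategy R n) (h : seq ('I_n * R)).

Lemma level_rcons h p i : level (rcons h p) i = (level h i + (p.1 == i))%N.
Proof. by rewrite /level -cats1 count_cat /= addn0. Qed.

Lemma level_run A s f h i : (level h i <= level (run T x A s f h) i)%N.
Proof.
elim: f h => [|f IH] h //=.
case: (st_query s h) => [j|] //; case: ifP => // _.
by apply: leq_trans (IH _); rewrite level_rcons leq_addr.
Qed.

Lemma size_run A s f h : (size (run T x A s f h) <= size h + f)%N.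
Proof.
elim: f h => [|f IH] h /=; first by rewrite addn0.
case: (st_query s h) => [i|]; last exact: leq_addr.
case: ifP => _; last exact: leq_addr.
by apply: leq_trans (IH _) _; rewrite size_rcons addSnnS.
Qed.

Lemma sum_level h : (\sum_(i < n) level h i)%N = size h.
Proof.
elim: h => [|p h IH]; first by rewrite big1.
rewrite (eq_bigr (fun i => (p.1 == i) + level h i)%N) // big_split /= IH.
by rewrite (bigD1 p.1) //= eqxx big1 // => i /negbTE; rewrite eq_sym => ->.
Qed.

(* Every configuration taken to level T has consumed T units of the budget. *)
Lemma saturated_run_le A s B : (0 < T)%N ->
  (\sum_(i < n) (T <= level (run T x A s B [::]) i) <= B %/ T)%N.
Proof.
move=> T0; rewrite leq_divRL // mulnC big_distrr /=.
apply: leq_trans (size_run A s B [::]); rewrite -sum_level.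
by apply: leq_sum => i _; case: (leqP T) => [|_]; rewrite ?muln1 ?muln0.
Qed.

Lemma run_agree A A' s j :
  (forall i b, (i != j) || (b < T)%N -> A (x i) b = A' (x i) b) ->
  forall f h, (level (run T x A s f h) j < T)%N ->
  run T x A s f h = run T x A' s f h.
Proof.
move=> AA'; elim=> [|f IH] h //=.
case: (st_query s h) => [i|] //; case: ifP => // _ lt_jT.
have AA'i : A (x i) (level h i).+1 = A' (x i) (level h i).+1.
  apply: AA'; case: (eqVneq i j) => [eq_ij|] //=; subst i.
  apply: leq_ltn_trans lt_jT; apply: leq_trans (level_run _ _ _ _ j).
  by rewrite level_rcons eqxx addn1.
by rewrite AA'i in lt_jT *; exact: IH.
Qed.

End Run.

Section Probability.
Variables (R : realType) (dd : measure_display) (Omega : measurableType dd).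
Variable P : probability Omega R.

Lemma sum_prob_le (I : Type) (s : seq I) (E : I -> set Omega) (M : R) :
  (forall j, measurable (E j)) ->
  (forall w, \sum_(j <- s) \1_(E j) w <= M) ->
  \sum_(j <- s) fine (P (E j)) <= M.
Proof.
move=> mE bound.
have mind j : measurable_fun [set: Omega] (fun w => (\1_(E j) w : R)%:E : \bar R).
  exact/measurable_EFinP/measurable_indic.
rewrite -lee_fin -sumEFin.
rewrite (eq_bigr (fun j => \int[P]_(w in setT) (\1_(E j) w : R)%:E)%E) => [|j _]; last first.
  by rewrite integral_indic // setIT fineK // fin_num_measure.
rewrite -ge0_integral_sum //.
apply: le_trans (_ : (\int[P]_(w in setT) (cst M%:E w) <= _)%E).
  apply: ge0_le_integral => //.
  - by move=> w _; apply: sume_ge0 => j _; rewrite lee_fin.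
  - exact: emeasurable_sum.
  - by move=> w _ /=; rewrite sumEFin lee_fin.
by rewrite integral_cst // [X in (_ * X)%E]probability_setT mule1.
Qed.

Lemma exists_unlikely_event (I : finType) (J : {pred I}) (E : I -> set Omega)
    (M p : R) :
  {in J, forall j, measurable (E j)} ->
  (forall w, \sum_(j in J) \1_(E j) w <= M) -> M < #|J|%:R * p ->
  exists2 j, j \in J & fine (P (E j)) < p.
Proof.
move=> mE bound ltM.
have [/exists_inP [j Jj ltp]|] := boolP [exists j in J, fine (P (E j)) < p].
  by exists j.
rewrite negb_exists_in => /forall_inP gep; exfalso.
(* Outside J the events need not be measurable: replace them by set0. *)
pose E' j := if j \in J then E j else set0.
have sumE' (F : set Omega -> R) : F set0 = 0 ->
    \sum_j F (E' j) = \sum_(j in J) F (E j).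
  by move=> F0; rewrite [RHS]big_mkcond; apply: eq_bigr => j _; rewrite /E'; case: ifP.
have : \sum_(j in J) fine (P (E j)) <= M.
  rewrite -(sumE' (fun A => fine (P A))) ?measure0 //.
  apply: sum_prob_le => // [j|w]; first by rewrite /E'; case: ifPn => [/mE|].
  by rewrite (sumE' (fun A => \1_A w)) ?indic0.
have : #|J|%:R * p <= \sum_(j in J) fine (P (E j)).
  rewrite -sum1_card natr_sum mulr_suml; apply: ler_sum => j Jj.
  by rewrite mul1r leNgt; exact: gep.
by move=> /(lt_le_trans ltM) /lt_le_trans /[apply]; rewrite ltxx.
Qed.

Lemma expected_value_le (d n T B : nat) (x : 'I_n -> 'rV[R]_d)
    (A : 'rV[R]_d -> nat -> R) (alg : Omega -> strategy R n) (j : 'I_n) (a b : R) :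
  (forall i, measurable [set w | alg_output T B x A (alg w) = i]) ->
  0 <= a -> (forall i, i != j -> A (x i) T <= a) -> A (x j) T <= b ->
  expected_value P T B x A alg <=
    a + (b - a) * fine (P [set w | alg_output T B x A (alg w) = j]).
Proof.
move=> mO a0 Aa Ab.
pose p i := fine (P [set w | alg_output T B x A (alg w) = i]).
have p0 i : 0 <= p i by rewrite fine_ge0 // measure_ge0.
have sum_p : \sum_i p i <= 1.
  apply: sum_prob_le => // w.
  rewrite (bigD1 (alg_output T B x A (alg w))) //= big1 ?addr0.
    by rewrite indicE mem_set.
  by move=> i ne_i; rewrite indicE memNset //= => eq_i; rewrite eq_i eqxx in ne_i.
rewrite (bigD1 j) //= in sum_p.
have rest : \sum_(i | i != j) p i * A (x i) T <= (1 - p j) * a.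
  apply: le_trans (_ : (\sum_(i | i != j) p i) * a <= _).
    by rewrite mulr_suml; apply: ler_sum => i /Aa; exact: ler_wpM2l.
  by rewrite ler_wpM2r // lerBrDl.
have := ler_wpM2l (p0 j) Ab.
rewrite /expected_value (bigD1 j) //= -/(p j); lra.
Qed.

End Probability.

Section Distance.
Variable R : realType.

Lemma dist2_ge0 (d : nat) (u v : 'rV[R]_d) : 0 <= dist2 u v.
Proof. exact: sqrtr_ge0. Qed.

Lemma dist2xx (d : nat) (u : 'rV[R]_d) : dist2 u u = 0.
Proof.
by rewrite /dist2 subrr /l2norm big1 ?sqrtr0 // => i _; rewrite mxE expr0n.
Qed.

Lemma dist2C (d : nat) (u v : 'rV[R]_d) : dist2 u v = dist2 v u.
Proof.
by rewrite /dist2 -opprB /l2norm; congr Num.sqrt; apply: eq_bigr => i _; rewrite mxE sqrrN.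
Qed.

Lemma dist2_row1 (a b : R) : dist2 (\row_(_ < 1) a) (\row_(_ < 1) b) = `|a - b|.
Proof. by rewrite /dist2 /l2norm big_ord1 !mxE sqrtr_sqr. Qed.

Lemma injective_of_sep (d n : nat) (x : 'I_n -> 'rV[R]_d) (r : R) :
  0 < r -> (forall i j, i != j -> r <= dist2 (x i) (x j)) -> injective x.
Proof.
move=> r_gt0 sep i j xij; apply/eqP; apply: contraLR r_gt0 => /sep.
by rewrite xij dist2xx -leNgt.
Qed.

Lemma opt_cluster_radius_min_dist (d n : nat) (x : 'I_n.+1 -> 'rV[R]_d) (r : R)
    (i0 i1 : 'I_n.+1) :
  (forall i j, i != j -> r <= dist2 (x i) (x j)) ->
  i0 != i1 -> dist2 (x i0) (x i1) <= r ->
  opt_cluster_radius x n r.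
Proof.
move=> sep i01 d01; have r0 : 0 <= r := le_trans (dist2_ge0 _ _) d01.
split.
  exists [set~ i1]%SET; split; first by rewrite cardsC1 card_ord.
  split.
    move=> i; have [->|i1i] := eqVneq i i1.
      by exists i0; rewrite ?in_setC1 // dist2C.
    by exists i; rewrite ?in_setC1 // dist2xx.
  by exists i1 => c; rewrite in_setC1 => c1; apply: sep; rewrite eq_sym.
move=> C rho cardC [cover _].
have /subsetPn [p _ pC] : ~~ ([set: 'I_n.+1]%SET \subset C).
  by apply/negP => /subset_leq_card; rewrite cardsT card_ord cardC ltnn.
have [c cC pc] := cover p.
by apply: le_trans pc; apply: sep; apply: contraNneq pC => ->.
Qed.

End Distance.

Section Smoothness.
Variable R : realType.

Lemma uvp_ratio_id (a : R) : uvp_ratio a a = 1%E.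
Proof. by rewrite /uvp_ratio; case: eqVneq => // a0; rewrite divff. Qed.

Lemma uvp_ratio_ge0 (a c : R) : 0 <= a -> 0 <= c -> (0 <= uvp_ratio a c)%E.
Proof.
move=> a0 c0; rewrite /uvp_ratio; case: ifP => _; first by case: ifP.
by rewrite lee_fin divr_ge0.
Qed.

(* Two configurations either share their value curve, which makes the ratio 1,
   or are at least 1/eps apart, which makes the required bound nonpositive. *)
Lemma smooth_assump_twin_or_far (d n T : nat) (eps : R) (x : 'I_n -> 'rV[R]_d)
    (A : 'rV[R]_d -> nat -> R) :
  0 <= eps -> (forall i b, (1 <= b <= T)%N -> 0 <= A (x i) b) ->
  (forall i i', (forall b, A (x i) b = A (x i') b) \/ 1 <= eps * dist2 (x i) (x i')) ->
  smooth_assump T eps x A.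
Proof.
move=> eps0 A0 twin_or_far i i' b bT.
have [-> | far] := twin_or_far i i'.
  by rewrite uvp_ratio_id lee_fin gerBl mulr_ge0 ?dist2_ge0.
apply: le_trans (uvp_ratio_ge0 (A0 _ _ bT) (A0 _ _ bT)).
by rewrite lee_fin subr_le0.
Qed.

End Smoothness.

Section Spike.
Variables (R : realType) (T : nat).

Definition ramp (c b : nat) : R := (minn b c)%:R / T%:R.

Lemma ramp_ge0 (c b : nat) : 0 <= ramp c b.
Proof. exact: divr_ge0. Qed.

Lemma ramp_le1 (c b : nat) : (0 < T)%N -> (c <= T)%N -> ramp c b <= 1.
Proof. by move=> T0 cT; rewrite ler_pdivrMr ?ltr0n // mul1r ler_nat; lia. Qed.

Lemma ramp_mono (c b1 b2 : nat) : (b1 <= b2)%N -> ramp c b1 <= ramp c b2.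
Proof. by move=> b12; rewrite ler_wpM2r ?invr_ge0 // ler_nat; lia. Qed.

Lemma ramp_concave (c b : nat) : (1 <= b)%N ->
  ramp c b.+1 - ramp c b <= ramp c b - ramp c b.-1.
Proof.
move=> b1; have : (minn b.+1 c + minn b.-1 c <= minn b c + minn b c)%N by lia.
rewrite -(ler_nat R) !natrD => conc.
by rewrite /ramp -!mulrBl ler_wpM2r ?invr_ge0 //; lra.
Qed.

Lemma ramp_below (c c' b : nat) : (b <= c)%N -> (b <= c')%N -> ramp c b = ramp c' b.
Proof. by move=> bc bc'; rewrite /ramp (minn_idPl bc) (minn_idPl bc'). Qed.

Lemma rampTT : (0 < T)%N -> ramp T T = 1.
Proof. by move=> T0; rewrite /ramp minnn divff // pnatr_eq0 -lt0n. Qed.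

Lemma ramp_predT_T : (0 < T)%N -> ramp T.-1 T = 1 - T%:R^-1.
Proof.
move=> T0; rewrite /ramp (minn_idPr (leq_pred T)) -subn1 natrB // mulrBl.
by rewrite divff ?mul1r // pnatr_eq0 -lt0n.
Qed.

Definition flat_instance (d : nat) (v : 'rV[R]_d) (b : nat) : R := ramp T.-1 b.

Definition spike_instance (d n : nat) (x : 'I_n -> 'rV[R]_d) (j : 'I_n)
    (v : 'rV[R]_d) (b : nat) : R :=
  ramp (if v == x j then T else T.-1) b.

Variables (d n : nat) (x : 'I_n -> 'rV[R]_d).
Hypothesis x_inj : injective x.

Lemma spike_instance_x (j i : 'I_n) (b : nat) :
  spike_instance x j (x i) b = ramp (if i == j then T else T.-1) b.
Proof. by rewrite /spike_instance (inj_eq x_inj). Qed.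

Lemma spike_instance_valid (eps : R) (j : 'I_n) : (0 < T)%N -> 0 <= eps ->
  (forall i, i != j -> 1 <= eps * dist2 (x i) (x j)) ->
  uvp_instance T eps x (spike_instance x j) /\ concave_assump T x (spike_instance x j).
Proof.
move=> T0 eps0 far; split; [split; [|split] |].
- by move=> v b _; rewrite ramp_ge0 ramp_le1 //; case: ifP => // _; exact: leq_pred.
- by move=> i b1 b2 _ b12 _; exact: ramp_mono.
- apply: smooth_assump_twin_or_far => // [i b _|i i']; first exact: ramp_ge0.
  have [-> | ij] := eqVneq i j; have [-> | i'j] := eqVneq i' j.
  + by left.
  + by right; rewrite dist2C; exact: far.
  + by right; exact: far.
  + by left => b; rewrite !spike_instance_x (negbTE ij) (negbTE i'j).
- by move=> i b b2 _; apply: ramp_concave; exact: ltnW.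
Qed.

Lemma opt_value_spike (j : 'I_n) : (0 < T)%N -> 1 <= opt_value T x (spike_instance x j).
Proof.
move=> T0; apply: le_trans (le_bigmax 0 (fun i => spike_instance x j (x i) T) j).
by rewrite spike_instance_x eqxx rampTT.
Qed.

(* A run that never takes the spike configuration to level T cannot tell the
   spike instance from the flat one, so it sees the same history on both. *)
Lemma spike_hits_le (s : strategy R n) (B : nat) : (0 < T)%N ->
  (\sum_(j < n) (alg_output T B x (spike_instance x j) s == j) <= (B %/ T).+1)%N.
Proof.
move=> T0; set h := run T x (@flat_instance d) s B [::].
have hit j : ((alg_output T B x (spike_instance x j) s == j) <=
    (T <= level h j) + (alg_output T B x (@flat_instance d) s == j))%N.
  have [_|lt_jT] := leqP T (level h j); first by apply: leq_trans (leq_b1 _) _.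
  rewrite /alg_output -(run_agree _ lt_jT) // => i b.
  rewrite spike_instance_x /flat_instance; case: eqVneq => //= _ bT.
  by apply: ramp_below; lia.
apply: leq_trans (leq_sum _ (fun j _ => hit j)) _.
rewrite big_split /= -addn1 leq_add ?saturated_run_le //.
rewrite (bigD1 (alg_output T B x (@flat_instance d) s)) //= eqxx big1 // => j.
by rewrite eq_sym => /negbTE ->.
Qed.

End Spike.

Section SpikeProbability.
Variables (R : realType) (dd : measure_display) (Omega : measurableType dd).
Variable P : probability Omega R.

Lemma exists_unlikely_spike (d n T B : nat) (x : 'I_n -> 'rV[R]_d)
    (alg : Omega -> strategy R n) (J : {pred 'I_n}) :
  (0 < T)%N -> injective x ->
  {in J, forall j, measurable [set w | alg_output T B x (spike_instance T x j) (alg w) = j]} ->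
  (2 * (B %/ T).+1 < #|J|)%N ->
  exists2 j, j \in J &
    fine (P [set w | alg_output T B x (spike_instance T x j) (alg w) = j]) < 2^-1.
Proof.
move=> T0 x_inj meas ltJ.
apply: (exists_unlikely_event P (M := (B %/ T).+1%:R)) => // [w|].
  apply: le_trans (_ : \sum_j (alg_output T B x (spike_instance T x j) (alg w) == j)%:R <= _).
    rewrite [leLHS]big_mkcond /=; apply: ler_sum => j _; case: ifP => _ //.
    by rewrite indicE; case: (boolP (w \in _)) => [/set_mem ->|_]; rewrite ?eqxx ?ler0n.
  by rewrite -natr_sum ler_nat spike_hits_le.
by move: ltJ; rewrite -(ltr_nat R) natrM; lra.
Qed.

Lemma spike_expected_value_lt (d n T B : nat) (x : 'I_n -> 'rV[R]_d)
    (alg : Omega -> strategy R n) (j : 'I_n) :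
  (0 < T)%N -> injective x ->
  (forall i, measurable [set w | alg_output T B x (spike_instance T x j) (alg w) = i]) ->
  fine (P [set w | alg_output T B x (spike_instance T x j) (alg w) = j]) < 2^-1 ->
  expected_value P T B x (spike_instance T x j) alg < 1 - (2 * T%:R)^-1.
Proof.
move=> T0 x_inj meas lt_half.
have c_gt0 : 0 < T%:R^-1 :> R by rewrite invr_gt0 ltr0n.
have a_ge0 : 0 <= 1 - T%:R^-1 :> R by rewrite subr_ge0 invf_le1 ?ler1n ?ltr0n.
have val_i i : i != j -> spike_instance T x j (x i) T <= 1 - T%:R^-1.
  by move=> /negbTE ij; rewrite spike_instance_x // ij ramp_predT_T.
have val_j : spike_instance T x j (x j) T <= 1 by rewrite spike_instance_x // eqxx rampTT.
apply: le_lt_trans (expected_value_le P meas a_ge0 val_i val_j) _.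
have : T%:R^-1 * fine (P [set w | alg_output T B x (spike_instance T x j) (alg w) = j])
    < T%:R^-1 / 2 by rewrite ltr_pM2l.
by rewrite subKr invfM; lra.
Qed.

End SpikeProbability.

Section HardPoints.
Variable R : realType.

Definition hard_pos (s r : R) (m : nat) : R :=
  if m == 0%N then 0 else if m == 1%N then r else m%:R * s.

Definition hard_point (n : nat) (s r : R) (i : 'I_n) : 'rV[R]_1 :=
  \row_(_ < 1) hard_pos s r i.

Lemma hard_pos_far (s r : R) (i j : nat) : 0 < s -> r <= s ->
  (2 <= i)%N -> i != j -> s <= `|hard_pos s r i - hard_pos s r j|.
Proof.
move=> s_gt0 r_le_s i2 ij; rewrite ler_normr; apply/orP.
have -> : hard_pos s r i = i%:R * s by rewrite /hard_pos; case: i i2 ij => [|[|i]].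
have leMs m1 m2 : (m1 <= m2)%N -> m1%:R * s <= m2%:R * s.
  by move=> le_m; rewrite ler_wpM2r ?ler_nat // ltW.
have le2i := leMs _ _ i2.
rewrite /hard_pos; case: eqP => [_|_]; first by left; lra.
case: eqP => [_|_]; first by left; lra.
have [lt_ij|le_ji] := ltnP i j.
  by have := leMs _ _ lt_ij; rewrite -addn1 natrD => ?; right; lra.
have : (j < i)%N by rewrite ltn_neqAle eq_sym ij.
by move=> /leMs; rewrite -addn1 natrD => ?; left; lra.
Qed.

Lemma hard_pos_sep (s r : R) (i j : nat) : 0 < s -> 0 <= r <= s ->
  i != j -> r <= `|hard_pos s r i - hard_pos s r j|.
Proof.
move=> s_gt0 /andP[r_ge0 r_le_s] ij; have [i2|i_lt2] := leqP 2 i.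
  exact: le_trans r_le_s (hard_pos_far s_gt0 r_le_s i2 ij).
have [j2|j_lt2] := leqP 2 j.
  rewrite distrC; apply: le_trans r_le_s (hard_pos_far s_gt0 r_le_s j2 _).
  by rewrite eq_sym.
rewrite /hard_pos; case: i j ij i_lt2 j_lt2 => [|[|i]] [|[|j]] //= _ _ _.
- by rewrite sub0r normrN ger0_norm.
- by rewrite subr0 ger0_norm.
Qed.

Lemma hard_point_sep (n : nat) (s r : R) (i j : 'I_n) : 0 < s -> 0 <= r <= s ->
  i != j -> r <= dist2 (hard_point s r i) (hard_point s r j).
Proof. by rewrite dist2_row1; exact: hard_pos_sep. Qed.

Lemma hard_point_far (n : nat) (s r : R) (i j : 'I_n) : 0 < s -> r <= s ->
  (2 <= j)%N -> i != j -> s <= dist2 (hard_point s r i) (hard_point s r j).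
Proof.
move=> s_gt0 r_le_s j2 ij; rewrite dist2_row1 distrC.
by apply: hard_pos_far; rewrite // eq_sym.
Qed.

Lemma hard_point_injective (n : nat) (s r : R) :
  0 < s -> 0 < r <= s -> injective (@hard_point n s r).
Proof.
move=> s_gt0 /andP[r_gt0 r_le_s]; apply: (injective_of_sep r_gt0) => i j.
by apply: hard_point_sep; rewrite // (ltW r_gt0).
Qed.

Lemma opt_cluster_radius_hard_point (n : nat) (s r : R) :
  (0 < n)%N -> 0 < s -> 0 <= r <= s -> opt_cluster_radius (@hard_point n.+1 s r) n r.
Proof.
move=> n_gt0 s_gt0 r_bd; have lt1n : (1 < n.+1)%N by [].
apply: (opt_cluster_radius_min_dist (i0 := ord0) (i1 := Ordinal lt1n)) => //.
  by move=> i j; exact: hard_point_sep.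
by rewrite dist2_row1 /hard_pos /= sub0r normrN ger0_norm //; case/andP: r_bd.
Qed.

Lemma spike_hard_point_valid (n T : nat) (eps r : R) (j : 'I_n) :
  (0 < T)%N -> 0 < eps -> 0 < r <= eps^-1 -> (2 <= j)%N ->
  let x := @hard_point n eps^-1 r in
  uvp_instance T eps x (spike_instance T x j) /\ concave_assump T x (spike_instance T x j).
Proof.
move=> T0 eps_gt0 r_bd j2 x; have s_gt0 : 0 < eps^-1 by rewrite invr_gt0.
apply: spike_instance_valid => //.
- exact: hard_point_injective.
- exact: ltW.
- move=> i ij; rewrite -(mulfV (lt0r_neq0 eps_gt0)); apply: (ler_wpM2l (ltW eps_gt0)).
  by apply: hard_point_far; case/andP: r_bd.
Qed.

End HardPoints.

Theorem corollary2 (R : realType) (eps : R) (T B : nat) :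
  0 < eps -> (0 < T)%N -> (T <= B)%N ->
  let k := (5 * (B %/ T) + 5)%N in
  exists (d n : nat) (x : 'I_n -> 'rV[R]_d) (r : R),
    injective x /\ opt_cluster_radius x k r /\ 0 < r /\
    forall (dd : measure_display) (Omega : measurableType dd)
           (P : probability Omega R) (alg : Omega -> strategy R n),
      (forall (A : 'rV[R]_d -> nat -> R) (j : 'I_n),
          uvp_instance T eps x A -> concave_assump T x A ->
          measurable [set w | alg_output T B x A (alg w) = j]) ->
      forall alpha : R, 1 - eps * r < alpha ->
        exists A : 'rV[R]_d -> nat -> R,
          uvp_instance T eps x A /\ concave_assump T x A /\
          expected_value P T B x A alg < alpha * opt_value T x A.
Proof.
move=> eps_gt0 T_gt0 le_TB k.
pose r := eps^-1 / (2 * T%:R); pose x := @hard_point R k.+1 eps^-1 r.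
have eps_r : eps * r = (2 * T%:R)^-1 by rewrite mulrA mulfV ?lt0r_neq0 // mul1r.
have s_gt0 : 0 < eps^-1 by rewrite invr_gt0.
have r_gt0 : 0 < r by rewrite divr_gt0 ?mulr_gt0 ?ltr0n.
have r_le_s : r <= eps^-1.
  by rewrite ler_pdivrMr ?mulr_gt0 ?ltr0n // ler_peMr ?(ltW s_gt0) // -natrM ler1n muln_gt0.
have x_inj : injective x by apply: hard_point_injective; rewrite ?r_gt0.
have valid (j : 'I_k.+1) : (2 <= j)%N ->
    uvp_instance T eps x (spike_instance T x j) /\ concave_assump T x (spike_instance T x j).
  by move=> j2; apply: spike_hard_point_valid; rewrite ?r_gt0.
exists 1%N, k.+1, x, r; split=> //; split.
  by apply: opt_cluster_radius_hard_point; rewrite ?(ltW r_gt0) ?r_le_s // /k; lia.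
split=> // dd Omega P alg meas alpha lt_alpha.
have card_J : (2 * (B %/ T).+1 < #|[pred j : 'I_k.+1 | (2 <= j)%N]|)%N.
  by rewrite card_ord_geq /k; lia.
have [j j2 lt_half] := exists_unlikely_spike P T_gt0 x_inj
  (fun j j2 => meas _ j (valid j j2).1 (valid j j2).2) card_J.
have [inst conc] := valid j j2.
exists (spike_instance T x j); split=> //; split=> //.
apply: lt_le_trans (spike_expected_value_lt T_gt0 x_inj (fun i => meas _ i inst conc) lt_half) _.
have eps_r_le1 : eps * r <= 1.
  by rewrite -(mulfV (lt0r_neq0 eps_gt0)); exact: ler_wpM2l (ltW eps_gt0) _ _ r_le_s.
rewrite -eps_r; apply: le_trans (ltW lt_alpha) _.
by rewrite ler_peMr ?opt_value_spike //; lra.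
Qed.
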